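(* Every Markov system is equivalent to a Markov system satisfying property ( * ).
   Context: A Markov system is a tuple $\mathbb{M}=(a,b,[a],[b],[b^{-1}])$ with $a$ an orientation-preserving involution of $S^1$, $b$ an orientation-preserving homeomorphism of $S^1$ of period three, and $[a],[b],[b^{-1}]\subset S^1$ such that: (A) they are pairwise disjoint, each a union of $k$ disjoint closed intervals ($k\in\mathbb{N}$, the multiplicity); components are $a$-, $b$-, $b^{-1}$-intervals; $X=[a]\cup[b]\cup[b^{-1}]$; (B) no two $a$-intervals are consecutive among the components of $X$ in circular order; likewise for $b$- and for $b^{-1}$-intervals; with principal gaps (gaps of $X$ between an $a$-interval and a $b^{\pm1}$-interval), complementary gaps (between a $b$- and a $b^{-1}$-interval), $b$-blocks (maximal intervals made of $b^{\pm1}$-intervals and complementary gaps) and $[[b]]$ the union of $b$-blocks: (C) $a([a])=[[b]]$; (D) $b([a])=[b]$, $b([b])=[b^{-1}]$; (E) $a$ maps principal gaps to principal gaps and exactly one of $b^{\pm1}$ maps a given principal gap to a principal gap; the graph on principal gaps joining $J$ to $a(J)$ and to that image is connected (the principal gaps form one cycle). Two Markov systems are equivalent if an orientation-preserving homeomorphism of $S^1$ sends $[a],[b],[b^{-1}]$ onto $[a'],[b'],[b'^{-1}]$. By (E), the principal gaps can be enumerated $I_1,I_1',I_2,I_2',\dots,I_k,I_k'$ so that for each $i$ there is $b_i\in\{b,b^{-1}\}$ with $b_i(I_i)=I_i'$ and $a(I_i')=I_{i+1}$ (indices mod $k$). Put $f_1=a\circ b_k\circ a\circ b_{k-1}\circ\cdots\circ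 a\circ b_1$, which maps $I_1$ to itself. Property ( * ): for such an enumeration, $f_1$ has no fixed point in the open interval $I_1$, and for every $z\in I_1$, $f_1^n(z)$ converges as $n\to\infty$ to the endpoint of $I_1$ lying in $[a]$. *)

(* Points of S^1 are represented by
   real numbers (mod 1), subsets of S^1 by (1-periodic) predicates on R, and
   orientation-preserving homeomorphisms of S^1 by their lifts: continuous
   strictly increasing maps F : R -> R with F (x+1) = F x + 1. *)
From Stdlib Require Import Reals Relations.
Open Scope R_scope.

Definition eqc (x y : R) : Prop := exists m : Z, y = x + IZR m.

Definition cdist (x y : R) : R :=
  Rmin (frac_part (x - y)) (1 - frac_part (x - y)).

Definition is_circ_homeo (F : R -> R) : Prop :=
  continuity F /\ (forall x y, x < y -> F x < F y) /\
  (forall x, F (x + 1) = F x + 1).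

Definition cset := R -> Prop.

Definition img (F : R -> R) (S : cset) : cset :=
  fun y => exists x, S x /\ eqc (F x) y.

Definition seteq (S T : cset) : Prop := forall x, S x <-> T x.

Record msys := MSys {
  ma : R -> R; mb : R -> R;
  setA : cset; setB : cset; setBi : cset }.

Inductive kind := KA | KB | KBi.

Definition kind_eqb (x y : kind) : bool :=
  match x, y with KA, KA | KB, KB | KBi, KBi => true | _, _ => false end.

(* Layout of X: its N components in circular order are the arcs
   [l i, r i] (mod 1), i < N, with
   l 0 < r 0 < l 1 < r 1 < ... < l (N-1) < r (N-1) < l 0 + 1,
   and component i is an a-, b- or b^{-1}-interval according to lab i. *)
Record layout := Layout {
  lN : nat; ll : nat -> R; lr : nat -> R; lab : nat -> kind }.

Definition nxt (L : layout) (i : nat) : nat :=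
  if Nat.ltb (S i) (lN L) then S i else O.

Definition lnext (L : layout) (i : nat) : R :=
  if Nat.ltb (S i) (lN L) then ll L (S i) else ll L O + 1.

Definition layout_ok (L : layout) : Prop :=
  (forall i, (i < lN L)%nat -> ll L i < lr L i) /\
  (forall i, (i < lN L)%nat -> lr L i < lnext L i).

Definition inU (L : layout) (K : kind) : cset :=
  fun x => exists i, (i < lN L)%nat /\ lab L i = K /\
           exists m : Z, ll L i <= x + IZR m <= lr L i.

Fixpoint cnt (lab : nat -> kind) (K : kind) (n : nat) : nat :=
  match n with
  | O => O
  | S n => (cnt lab K n + (if kind_eqb (lab n) K then 1 else 0))%nat
  end.

Definition gapS (L : layout) (i : nat) : cset :=
  fun x => exists m : Z, lr L i < x + IZR m < lnext L i.

Definition principal (L : layout) (i : nat) : Prop :=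
  (i < lN L)%nat /\ (lab L i = KA \/ lab L (nxt L i) = KA).

Definition complementary (L : layout) (i : nat) : Prop :=
  (i < lN L)%nat /\ lab L i <> KA /\ lab L (nxt L i) <> KA.

Definition bblocks (L : layout) : cset :=
  fun x => inU L KB x \/ inU L KBi x \/
           exists i, complementary L i /\ gapS L i x.

Definition realizes (M : msys) (L : layout) : Prop :=
  layout_ok L /\
  seteq (setA M) (inU L KA) /\ seteq (setB M) (inU L KB) /\
  seteq (setBi M) (inU L KBi).

Definition gap_adj (M : msys) (L : layout) (i j : nat) : Prop :=
  principal L i /\ principal L j /\
  (seteq (img (ma M) (gapS L i)) (gapS L j) \/
   seteq (img (mb M) (gapS L i)) (gapS L j) \/
   seteq (img (mb M) (gapS L j)) (gapS L i)).

Definition markov_conds (M : msys) (L : layout) : Prop :=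
  is_circ_homeo (ma M) /\ (forall x, eqc (ma M (ma M x)) x) /\
  is_circ_homeo (mb M) /\ (forall x, eqc (mb M (mb M (mb M x))) x) /\
  (exists x, ~ eqc (mb M x) x) /\
  realizes M L /\
  cnt (lab L) KA (lN L) = cnt (lab L) KB (lN L) /\
  cnt (lab L) KB (lN L) = cnt (lab L) KBi (lN L) /\
  (forall i, (i < lN L)%nat -> lab L i <> lab L (nxt L i)) /\
  seteq (img (ma M) (setA M)) (bblocks L) /\
  seteq (img (mb M) (setA M)) (setB M) /\
  seteq (img (mb M) (setB M)) (setBi M) /\
  (forall i, principal L i ->
     exists j, principal L j /\ seteq (img (ma M) (gapS L i)) (gapS L j)) /\
  (forall i, principal L i ->
     let P := exists j, principal L j /\
                seteq (img (mb M) (gapS L i)) (gapS L j) in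
     (* b^{-1} maps gap i to gap j  iff  b maps gap j to gap i *)
     let Q := exists j, principal L j /\
                seteq (img (mb M) (gapS L j)) (gapS L i) in
     (P /\ ~ Q) \/ (~ P /\ Q)) /\
  (forall i j, principal L i -> principal L j ->
     clos_refl_trans nat (gap_adj M L) i j).

Definition is_markov (M : msys) : Prop :=
  exists L, markov_conds M L.

Definition equivalent (M M' : msys) : Prop :=
  exists h, is_circ_homeo h /\
    seteq (img h (setA M)) (setA M') /\
    seteq (img h (setB M)) (setB M') /\
    seteq (img h (setBi M)) (setBi M').

(* An enumeration I_1, I_1', ..., I_k, I_k' of the principal gaps:
   I_i = gap (g i), I_i' = gap (g' i) (0-based, i < k), and
   b_i = b if e i, b_i = b^{-1} otherwise. *)
Definition valid_enum (M : msys) (L : layout) (k : nat)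
    (g g' : nat -> nat) (e : nat -> bool) : Prop :=
  (forall i, (i < k)%nat -> principal L (g i) /\ principal L (g' i)) /\
  (forall i j, (i < k)%nat -> (j < k)%nat ->
     (g i = g j -> i = j) /\ (g' i = g' j -> i = j) /\ g i <> g' j) /\
  (forall j, principal L j -> exists i, (i < k)%nat /\ (j = g i \/ j = g' i)) /\
  (forall i, (i < k)%nat ->
     (if e i then seteq (img (mb M) (gapS L (g i))) (gapS L (g' i))
      else seteq (img (mb M) (gapS L (g' i))) (gapS L (g i))) /\
     seteq (img (ma M) (gapS L (g' i)))
           (gapS L (g (if Nat.ltb (S i) k then S i else O)))).

(* lift of b_i; b^{-1} = b o b on the circle since b has period three *)
Definition bsel (M : msys) (e : nat -> bool) (i : nat) (x : R) : R :=
  if e i then mb M x else mb M (mb M x).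

(* f_1 = a o b_k o a o b_{k-1} o ... o a o b_1 (composed over i < n) *)
Fixpoint fcomp (M : msys) (e : nat -> bool) (n : nat) (x : R) : R :=
  match n with
  | O => x
  | S n => ma M (bsel M e n (fcomp M e n x))
  end.

Definition prop_star (M : msys) : Prop :=
  forall L, realizes M L ->
  forall k g g' e, valid_enum M L k g g' e ->
  (0 < k)%nat ->
  let f1 := fcomp M e k in
  (~ exists z, gapS L (g O) z /\ eqc (f1 z) z) /\
  (forall z, gapS L (g O) z ->
   forall p, (p = lr L (g O) \/ p = lnext L (g O)) -> setA M p ->
   Un_cv (fun n => cdist (Nat.iter n f1 z) p) 0).

(* Keep the sets [a], [b], [b^-1] and change a and b only inside the gaps of X.  On each
   principal gap, a becomes the affine map onto the image gap.  On each gap of X, b is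
   reparametrized by s |-> s^2, s |-> sqrt s or s |-> s (s the relative position) according
   as the right end, the left end, or neither end of the gap lies in [b^-1]; along every
   b-orbit of gaps these compose to the identity, so the new b still has period three.
   Measure a point of a principal gap by its distance q to the [a]-end, relative to the
   length of the gap.  Each step a o b_i from I_i to I_(i+1) sends q to q^2 or to
   1 - sqrt (1 - q), both at most c q with c < 1 uniformly on q <= q0 < 1.  So q decays
   geometrically along the orbits of f_1: f_1 has no fixed point in I_1, and its orbits
   converge to the [a]-end of I_1. *)

From Stdlib Require Import Reals Relations Lra Lia ZArith ClassicalEpsilon Classical.
Open Scope R_scope.

(** * Lifts of circle maps *)

Lemma lift_shift_int (F : R -> R) :
  (forall x, F (x + 1) = F x + 1) -> forall (m : Z) x, F (x + IZR m) = F x + IZR m.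
Proof.
  intros H m. induction m using Z.peano_ind; intro x.
  - rewrite !Rplus_0_r; reflexivity.
  - rewrite succ_IZR. replace (x + (IZR m + 1)) with ((x + IZR m) + 1) by ring.
    rewrite H, IHm; ring.
  - rewrite <- Z.sub_1_r, minus_IZR.
    assert (E : F (x + (IZR m - 1) + 1) = F (x + (IZR m - 1)) + 1) by apply H.
    replace (x + (IZR m - 1) + 1) with (x + IZR m) in E by ring.
    rewrite IHm in E. lra.
Qed.

Lemma circ_homeo_shift F : is_circ_homeo F -> forall m x, F (x + IZR m) = F x + IZR m.
Proof. intros (_ & _ & H). apply lift_shift_int, H. Qed.

Lemma eqc_refl x : eqc x x.
Proof. exists 0%Z. simpl; ring. Qed.

Lemma eqc_sym x y : eqc x y -> eqc y x.
Proof. intros [m H]. exists (- m)%Z. rewrite opp_IZR. lra. Qed.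

Lemma eqc_trans x y z : eqc x y -> eqc y z -> eqc x z.
Proof. intros [m H] [n H']. exists (m + n)%Z. rewrite plus_IZR. lra. Qed.

Lemma eqc_lift F x y : (forall x, F (x + 1) = F x + 1) -> eqc x y -> eqc (F x) (F y).
Proof. intros H [m E]. subst y. exists m. apply lift_shift_int, H. Qed.

Lemma strict_incr_le F : strict_increasing F -> forall x y, x <= y -> F x <= F y.
Proof. intros H x y [h|h]; [left; auto | subst; lra]. Qed.

Lemma strict_incr_lt_inv F : strict_increasing F -> forall x y, F x < F y -> x < y.
Proof.
  intros H x y h. destruct (Rlt_le_dec x y) as [|h2]; auto.
  apply (strict_incr_le F H) in h2. lra.
Qed.

Lemma strict_incr_inj F : strict_increasing F -> forall x y, F x = F y -> x = y.
Proof.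
  intros H x y h. destruct (Rtotal_order x y) as [h2|[h2|h2]]; auto; apply H in h2; lra.
Qed.

Lemma eqc_circ_homeo_inj F u v : is_circ_homeo F -> eqc (F u) (F v) -> eqc u v.
Proof.
  intros HF [m e]. exists m. rewrite <- (circ_homeo_shift F HF) in e.
  destruct HF as (_ & Hi & _). exact (strict_incr_inj F Hi _ _ e).
Qed.

Lemma continuity_incr_surj g :
  strict_increasing g -> (forall y, exists x, g x = y) -> continuity g.
Proof.
  intros Hm Hs x eps heps. destruct (Hs (g x - eps)) as [u hu]. destruct (Hs (g x + eps)) as [v hv].
  assert (u < x) by (apply (strict_incr_lt_inv g Hm); lra).
  assert (x < v) by (apply (strict_incr_lt_inv g Hm); lra).
  exists (Rmin (x - u) (v - x)). split; [apply Rlt_gt, Rmin_glb_lt; lra|].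
  intros y [_ hy]. simpl in *. unfold R_dist in *.
  pose proof (Rmin_l (x - u) (v - x)). pose proof (Rmin_r (x - u) (v - x)).
  apply Rabs_def2 in hy. destruct hy.
  assert (g u < g y) by (apply Hm; lra). assert (g y < g v) by (apply Hm; lra).
  apply Rabs_def1; lra.
Qed.

Lemma IVT_strict_incr f : continuity f -> strict_increasing f ->
  forall l r y, l < r -> f l < y < f r -> exists x, l < x < r /\ f x = y.
Proof.
  intros Hc Hm l r y hlr hy.
  assert (Hc' : continuity (fun t => f t - y))
    by (apply continuity_minus; auto; apply continuity_const; easy).
  destruct (IVT (fun t => f t - y) l r Hc' hlr ltac:(lra) ltac:(lra)) as [z [hz e]].
  exists z. assert (f z = y) by lra. split; auto.
  split; destruct (Req_dec z l); destruct (Req_dec z r); subst; lra.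
Qed.

Lemma rel_pos_range l r x : l < x < r -> 0 < (x - l) / (r - l) < 1.
Proof.
  intros h. split.
  - apply Rdiv_lt_0_compat; lra.
  - apply (Rmult_lt_reg_r (r - l)); [lra|]. unfold Rdiv. rewrite Rmult_assoc, Rinv_l; lra.
Qed.

Lemma rel_pos_incr l r x y : l < r -> x < y -> (x - l) / (r - l) < (y - l) / (r - l).
Proof.
  intros h1 h2. unfold Rdiv. apply Rmult_lt_compat_r; [apply Rinv_0_lt_compat; lra|lra].
Qed.

Lemma rel_pos_affine a b u : a < b -> (a + (b - a) * u - a) / (b - a) = u.
Proof. intros h. field. lra. Qed.

Lemma rel_pos_shift_eq l r m x y : l < r ->
  (y - (l + m)) / (r + m - (l + m)) = (x - l) / (r - l) -> y = x + m.
Proof.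
  intros h E. replace (r + m - (l + m)) with (r - l) in E by ring.
  apply (Rmult_eq_compat_r (r - l)) in E. unfold Rdiv in E.
  rewrite !Rmult_assoc, Rinv_l in E by lra. lra.
Qed.

Lemma cdist_ge0 x y : 0 <= cdist x y.
Proof. unfold cdist. pose proof (base_fp (x - y)). apply Rmin_glb; lra. Qed.

Lemma cdist_le x y m : Rabs (x - y - IZR m) < 1 -> cdist x y <= Rabs (x - y - IZR m).
Proof.
  intros h. unfold cdist. set (d := x - y - IZR m) in *.
  destruct (Rle_dec 0 d) as [c|c].
  - rewrite Rabs_right in * by lra.
    destruct (Int_part_frac_part_spec (x - y) m d ltac:(lra) ltac:(unfold d; ring)) as [_ e].
    rewrite <- e. apply Rmin_l.
  - rewrite Rabs_left in * by lra.
    destruct (Int_part_frac_part_spec (x - y) (m - 1) (d + 1) ltac:(lra)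
      ltac:(unfold d; rewrite minus_IZR; simpl; ring)) as [_ e].
    rewrite <- e. eapply Rle_trans; [apply Rmin_r|lra].
Qed.

(** * Reparametrizing a map on a family of intervals *)

Definition in_ivl (P : R -> R -> Prop) (x l r : R) : Prop := P l r /\ l < x < r.

Definition disjoint_ivls (P : R -> R -> Prop) : Prop :=
  forall x l r l' r', in_ivl P x l r -> in_ivl P x l' r' -> l = l' /\ r = r'.

Lemma in_ivl_disjoint P x y l r l' r' : disjoint_ivls P ->
  in_ivl P x l r -> in_ivl P y l' r' -> x < y -> (l = l' /\ r = r') \/ r <= l'.
Proof.
  intros U h h' hxy. destruct (Rle_dec r l') as [c|c]; [right; auto|left].
  destruct h as [hP hx], h' as [hP' hy].
  set (z := (Rmax l l' + Rmin r r') / 2).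
  assert (l < z < r /\ l' < z < r') as [hz hz'].
  { unfold z, Rmax, Rmin. destruct (Rle_dec l l'), (Rle_dec r r'); lra. }
  exact (U z l r l' r' (conj hP hz) (conj hP' hz')).
Qed.

Definition reparam (f : R -> R) (P : R -> R -> Prop) (rho : R -> R -> R -> R) (x : R) : R :=
  match excluded_middle_informative (exists p : R * R, in_ivl P x (fst p) (snd p)) with
  | left H => let p := proj1_sig (constructive_indefinite_description _ H) in
      f (fst p) + (f (snd p) - f (fst p)) * rho (fst p) (snd p) ((x - fst p) / (snd p - fst p))
  | right _ => f x
  end.

Section Reparam.
Variables (f : R -> R) (P : R -> R -> Prop) (rho : R -> R -> R -> R).
Hypothesis HP : disjoint_ivls P.

Lemma reparam_in x l r : in_ivl P x l r ->
  reparam f P rho x = f l + (f r - f l) * rho l r ((x - l) / (r - l)).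
Proof.
  intros h. unfold reparam. destruct excluded_middle_informative as [H|H].
  - destruct (constructive_indefinite_description _ H) as [[l' r'] h']; simpl in *.
    destruct (HP x l r l' r' h h'); subst; reflexivity.
  - exfalso; apply H; exists (l, r); exact h.
Qed.

Lemma reparam_out x : ~ (exists l r, in_ivl P x l r) -> reparam f P rho x = f x.
Proof.
  intros h. unfold reparam. destruct excluded_middle_informative as [[[l r] H]|H]; auto.
  exfalso. apply h. exists l, r; exact H.
Qed.

Hypothesis Hf : strict_increasing f.
Hypothesis Hrho_range : forall l r s, P l r -> 0 < s < 1 -> 0 < rho l r s < 1.

Lemma reparam_range x l r : in_ivl P x l r -> f l < reparam f P rho x < f r.
Proof.
  intros h. rewrite (reparam_in x l r h).
  destruct h as [hP hx]. pose proof (Hrho_range l r _ hP (rel_pos_range l r x hx)).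
  assert (f l < f r) by (apply Hf; lra). split; nra.
Qed.

Hypothesis Hrho_incr :
  forall l r s t, P l r -> 0 < s -> s < t -> t < 1 -> rho l r s < rho l r t.

Lemma reparam_incr : strict_increasing (reparam f P rho).
Proof.
  intros x y hxy.
  destruct (classic (exists l r, in_ivl P x l r)) as [[l [r hx]]|nx];
  destruct (classic (exists l r, in_ivl P y l r)) as [[l' [r' hy]]|ny].
  - destruct (in_ivl_disjoint P x y l r l' r' HP hx hy hxy) as [[<- <-]|c].
    + rewrite (reparam_in x l r hx), (reparam_in y l r hy).
      destruct hx as [hP hx], hy as [_ hy].
      pose proof (Hrho_incr l r _ _ hP (proj1 (rel_pos_range l r x hx))
        (rel_pos_incr l r x y ltac:(lra) hxy) (proj2 (rel_pos_range l r y hy))).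
      assert (f l < f r) by (apply Hf; lra). nra.
    + pose proof (reparam_range x l r hx). pose proof (reparam_range y l' r' hy).
      pose proof (strict_incr_le f Hf r l' c). lra.
  - rewrite (reparam_out y ny). pose proof (reparam_range x l r hx).
    assert (hry : r <= y).
    { destruct (Rle_dec r y) as [|c]; auto. exfalso. apply ny. exists l, r.
      destruct hx as [hP hx]. split; auto; lra. }
    pose proof (strict_incr_le f Hf r y hry). lra.
  - rewrite (reparam_out x nx). pose proof (reparam_range y l' r' hy).
    assert (hxl : x <= l').
    { destruct (Rle_dec x l') as [|c]; auto. exfalso. apply nx. exists l', r'.
      destruct hy as [hP hy]. split; auto; lra. }
    pose proof (strict_incr_le f Hf x l' hxl). lra.
  - rewrite (reparam_out x nx), (reparam_out y ny). auto.
Qed.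

End Reparam.

Lemma reparam_periodic f P rho : disjoint_ivls P ->
  (forall x, f (x + 1) = f x + 1) ->
  (forall l r m, P l r -> P (l + IZR m) (r + IZR m)) ->
  (forall l r s, P l r -> rho (l + 1) (r + 1) s = rho l r s) ->
  forall x, reparam f P rho (x + 1) = reparam f P rho x + 1.
Proof.
  intros U Hf HPm Hrho x.
  destruct (classic (exists l r, in_ivl P x l r)) as [[l [r hx]]|nx].
  - assert (hx' : in_ivl P (x + 1) (l + 1) (r + 1)).
    { destruct hx as [hP h]. split; [exact (HPm l r 1%Z hP)|lra]. }
    rewrite (reparam_in _ _ _ U _ _ _ hx'), (reparam_in _ _ _ U _ _ _ hx).
    rewrite !Hf, Hrho by apply hx.
    replace ((x + 1 - (l + 1)) / (r + 1 - (l + 1))) with ((x - l) / (r - l)) by (f_equal; ring).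
    ring.
  - assert (nx' : ~ (exists l r, in_ivl P (x + 1) l r)).
    { intros [l [r [hP h]]]. apply nx. exists (l + IZR (-1)), (r + IZR (-1)).
      split; [exact (HPm l r (-1)%Z hP)|simpl; lra]. }
    rewrite (reparam_out _ _ _ _ nx), (reparam_out _ _ _ _ nx'). auto.
Qed.

(** * Layouts and the gaps of X *)

Section Layout.
Variable L : layout.
Hypothesis HL : layout_ok L.

Lemma lnext_cases i : (i < lN L)%nat ->
  (lnext L i = ll L (S i) /\ nxt L i = S i /\ (S i < lN L)%nat) \/
  (lnext L i = ll L 0 + 1 /\ nxt L i = 0%nat /\ S i = lN L).
Proof.
  intro h. unfold lnext, nxt. destruct (Nat.ltb (S i) (lN L)) eqn:E.
  - apply Nat.ltb_lt in E. left; auto.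
  - apply Nat.ltb_ge in E. right. repeat split; lia.
Qed.

Lemma lr_lt_ll_succ i : (S i < lN L)%nat -> lr L i < ll L (S i).
Proof.
  intro h. pose proof (proj2 HL i ltac:(lia)) as hi.
  destruct (lnext_cases i ltac:(lia)) as [[E _]|[_ [_ E]]]; [rewrite E in hi; auto | lia].
Qed.

Lemma lr_lt_ll i j : (i < j)%nat -> (j < lN L)%nat -> lr L i < ll L j.
Proof.
  intros h1 h2. induction j as [|j IH]; [lia|].
  destruct (Nat.eq_dec i j) as [->|ne]; [apply lr_lt_ll_succ; auto|].
  pose proof (IH ltac:(lia) ltac:(lia)). pose proof (proj1 HL j ltac:(lia)).
  pose proof (lr_lt_ll_succ j h2). lra.
Qed.

Lemma layout_bounds i : (i < lN L)%nat ->
  ll L 0 <= ll L i /\ ll L i < lr L i /\ lr L i < lnext L i /\ lnext L i <= ll L 0 + 1.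
Proof.
  intros h. destruct HL as [H1 H2].
  split; [|split; [auto|split; [auto|]]].
  - destruct i; [lra|].
    pose proof (lr_lt_ll 0 (S i) ltac:(lia) h). pose proof (H1 0%nat ltac:(lia)). lra.
  - destruct (lnext_cases i h) as [[E [_ h3]]|[E _]]; rewrite E; [|lra].
    assert (HN : (lN L - 1 < lN L)%nat) by lia.
    pose proof (H2 _ HN) as hlast. destruct (lnext_cases _ HN) as [[_ [_ h4]]|[E2 _]]; [lia|].
    rewrite E2 in hlast. pose proof (H1 _ HN).
    destruct (Nat.eq_dec (S i) (lN L - 1)) as [e|e]; [rewrite e; lra|].
    pose proof (lr_lt_ll (S i) (lN L - 1) ltac:(lia) HN). pose proof (H1 (S i) h3). lra.
Qed.

Lemma component_unique i j p m : (i < lN L)%nat -> (j < lN L)%nat ->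
  ll L i <= p <= lr L i -> ll L j <= p + IZR m <= lr L j -> i = j /\ m = 0%Z.
Proof.
  intros hi hj h1 h2.
  pose proof (layout_bounds i hi). pose proof (layout_bounds j hj).
  assert (m = 0%Z) by (apply one_IZR_lt1; lra). subst m. rewrite Rplus_0_r in h2.
  split; auto.
  destruct (Nat.lt_total i j) as [c|[c|c]]; auto.
  - pose proof (lr_lt_ll i j c hj). lra.
  - pose proof (lr_lt_ll j i c hi). lra.
Qed.

Lemma gap_not_component i j x m : (i < lN L)%nat -> (j < lN L)%nat ->
  lr L i < x < lnext L i -> ~ (ll L j <= x + IZR m <= lr L j).
Proof.
  intros hi hj h1 h2.
  pose proof (layout_bounds i hi). pose proof (layout_bounds j hj).
  assert (m = 0%Z) by (apply one_IZR_lt1; lra). subst m. rewrite Rplus_0_r in h2.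
  destruct (Nat.le_gt_cases j i) as [c|c].
  - destruct (Nat.eq_dec j i) as [e|e]; [subst; lra|].
    pose proof (lr_lt_ll j i ltac:(lia) hi). lra.
  - destruct (lnext_cases i hi) as [[E [_ h3]]|[E [_ h3]]]; [|lia].
    rewrite E in h1.
    destruct (Nat.eq_dec j (S i)) as [e|e]; [subst; lra|].
    pose proof (lr_lt_ll (S i) j ltac:(lia) hj). pose proof (layout_bounds (S i) h3). lra.
Qed.

End Layout.

Definition kset (M : msys) (K : kind) : cset :=
  match K with KA => setA M | KB => setB M | KBi => setBi M end.

Definition inX (M : msys) (x : R) : Prop := setA M x \/ setB M x \/ setBi M x.

Lemma inX_kset M x : inX M x <-> exists K, kset M K x.
Proof.
  split.
  - intros [h|[h|h]]; [exists KA|exists KB|exists KBi]; exact h.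
  - intros [[] h]; unfold inX; simpl in h; tauto.
Qed.

Lemma inU_shift L K x m : inU L K (x + IZR m) <-> inU L K x.
Proof.
  split; intros (i & hi & hl & n & h); exists i; split; auto; split; auto.
  - exists (m + n)%Z. rewrite plus_IZR. lra.
  - exists (n - m)%Z. rewrite minus_IZR. lra.
Qed.

Lemma gapS_shift L i x m : gapS L i (x + IZR m) <-> gapS L i x.
Proof.
  split; intros [n h].
  - exists (m + n)%Z. rewrite plus_IZR. lra.
  - exists (n - m)%Z. rewrite minus_IZR. lra.
Qed.

Lemma gapS_lift L i x : gapS L i x -> exists m, lr L i + IZR m < x < lnext L i + IZR m.
Proof. intros [m h]. exists (- m)%Z. rewrite opp_IZR. lra. Qed.

Lemma lift_gapS L i x m : lr L i + IZR m < x < lnext L i + IZR m -> gapS L i x.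
Proof. intros h. exists (- m)%Z. rewrite opp_IZR. lra. Qed.

Lemma img_self F S x : S x -> img F S (F x).
Proof. intros h. exists x. split; auto. apply eqc_refl. Qed.

Section Realization.
Variables (M : msys) (L : layout).
Hypothesis HR : realizes M L.

Lemma kset_inU K x : kset M K x <-> inU L K x.
Proof. destruct HR as (_ & HA & HB & HBi). destruct K; [apply HA|apply HB|apply HBi]. Qed.

Lemma kset_shift K x m : kset M K (x + IZR m) <-> kset M K x.
Proof. rewrite !kset_inU. apply inU_shift. Qed.

Lemma kset_eqc K x y : eqc x y -> kset M K x -> kset M K y.
Proof. intros [m e] h. subst y. apply kset_shift. auto. Qed.

Lemma inX_shift x m : inX M (x + IZR m) <-> inX M x.
Proof.
  rewrite !inX_kset.
  split; intros [K h]; exists K; [apply kset_shift in h|apply kset_shift]; exact h.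
Qed.

Lemma kset_component i p m : (i < lN L)%nat ->
  ll L i <= p <= lr L i -> kset M (lab L i) (p + IZR m).
Proof.
  intros hi hp. apply kset_inU.
  exists i. split; auto. split; auto. exists (- m)%Z. rewrite opp_IZR. lra.
Qed.

Lemma kset_component_lab i p m K : (i < lN L)%nat ->
  ll L i <= p <= lr L i -> kset M K (p + IZR m) -> lab L i = K.
Proof.
  intros hi hp h. apply kset_inU in h.
  destruct h as (j & hj & hl & n & hn).
  destruct (component_unique L (proj1 HR) i j p (m + n) hi hj hp) as [e _].
  { rewrite plus_IZR. lra. }
  subst; auto.
Qed.

Lemma kset_unique K K' x : kset M K x -> kset M K' x -> K = K'.
Proof.
  intros h h'. pose proof h as h0.
  apply kset_inU in h0. destruct h0 as (j & hj & hl & n & hn).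
  rewrite <- hl. apply (kset_component_lab j (x + IZR n) (- n) K' hj hn).
  rewrite opp_IZR. replace (x + IZR n + - IZR n) with x by ring. auto.
Qed.

Lemma inX_component x :
  inX M x <-> exists j m, (j < lN L)%nat /\ ll L j <= x + IZR m <= lr L j.
Proof.
  rewrite inX_kset. split.
  - intros [K h]. apply kset_inU in h. destruct h as (j & hj & _ & n & hn). exists j, n; auto.
  - intros (j & m & hj & h). exists (lab L j).
    pose proof (kset_component j (x + IZR m) (- m) hj h) as H.
    rewrite opp_IZR in H. replace (x + IZR m + - IZR m) with x in H by ring. auto.
Qed.

Lemma kset_lnext i : (i < lN L)%nat ->
  kset M (lab L (nxt L i)) (lnext L i) /\ (nxt L i < lN L)%nat.
Proof.
  intros hi. pose proof (proj1 (proj1 HR)) as H1.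
  destruct (lnext_cases L i hi) as [[E [E2 h3]]|[E [E2 h3]]]; rewrite E, E2.
  - split; auto. rewrite <- (Rplus_0_r (ll L (S i))). apply (kset_component (S i) _ 0 h3).
    pose proof (H1 (S i) h3). lra.
  - split; [|lia]. apply (kset_component 0 (ll L 0) 1); [lia|].
    pose proof (H1 0%nat ltac:(lia)). lra.
Qed.

End Realization.

(* Lifts to R of the gaps (resp. principal gaps) of X, described without reference to a layout. *)
Definition gap_ivl (M : msys) (l r : R) : Prop :=
  l < r /\ inX M l /\ inX M r /\ (forall y, l < y < r -> ~ inX M y).

Definition principal_ivl (M : msys) (l r : R) : Prop :=
  gap_ivl M l r /\ (setA M l \/ setA M r).

Lemma gap_ivl_disjoint M : disjoint_ivls (gap_ivl M).
Proof.
  intros x l r l' r' [(h1 & h2 & h3 & h4) h5] [(g1 & g2 & g3 & g4) g5].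
  split.
  - destruct (Rtotal_order l l') as [c|[c|c]]; auto.
    + exfalso; apply (h4 l'); auto; lra.
    + exfalso; apply (g4 l); auto; lra.
  - destruct (Rtotal_order r r') as [c|[c|c]]; auto.
    + exfalso; apply (g4 r); auto; lra.
    + exfalso; apply (h4 r'); auto; lra.
Qed.

Lemma principal_ivl_disjoint M : disjoint_ivls (principal_ivl M).
Proof.
  intros x l r l' r' [[h _] h'] [[g _] g']. apply (gap_ivl_disjoint M x); split; auto.
Qed.

Lemma in_principal_ivl_gap M y l r : in_ivl (principal_ivl M) y l r -> in_ivl (gap_ivl M) y l r.
Proof. intros [[h _] hy]. split; auto. Qed.

Lemma gap_ivl_same_left M l r r' : gap_ivl M l r -> gap_ivl M l r' -> r = r'.
Proof.
  intros h h'. pose proof (proj1 h). pose proof (proj1 h').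
  set (x := l + Rmin (r - l) (r' - l) / 2).
  assert (l < x < r /\ l < x < r') as [hx hx'].
  { pose proof (Rmin_l (r - l) (r' - l)). pose proof (Rmin_r (r - l) (r' - l)).
    assert (0 < Rmin (r - l) (r' - l)) by (apply Rmin_glb_lt; lra). unfold x; lra. }
  exact (proj2 (gap_ivl_disjoint M x l r l r' (conj h hx) (conj h' hx'))).
Qed.

Section GapIntervals.
Variables (M : msys) (L : layout).
Hypothesis HR : realizes M L.

Lemma gap_ivl_shift l r m : gap_ivl M l r -> gap_ivl M (l + IZR m) (r + IZR m).
Proof.
  intros (h1 & h2 & h3 & h4). split; [lra|].
  split; [apply (inX_shift M L HR); auto|]. split; [apply (inX_shift M L HR); auto|].
  intros y hy hX. apply (h4 (y + IZR (- m))).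
  - rewrite opp_IZR; lra.
  - apply (inX_shift M L HR); auto.
Qed.

Lemma principal_ivl_shift l r m : principal_ivl M l r -> principal_ivl M (l + IZR m) (r + IZR m).
Proof.
  intros [h1 h2]. split; [apply gap_ivl_shift; auto|].
  destruct h2 as [h|h]; [left|right]; apply (kset_shift M L HR KA); auto.
Qed.

Lemma gap_ivl_shift_same_left l r l' r' m : gap_ivl M l r -> gap_ivl M l' r' ->
  l' = l + IZR m -> r' = r + IZR m.
Proof. intros G G' ->. exact (gap_ivl_same_left M _ _ _ G' (gap_ivl_shift l r m G)). Qed.

Lemma gap_ivl_length l r : gap_ivl M l r -> r <= l + 1.
Proof.
  intros (h1 & h2 & h3 & h4). destruct (Rle_dec r (l + 1)) as [|c]; auto.
  exfalso. apply (h4 (l + IZR 1)); [simpl; lra|]. apply (inX_shift M L HR); auto.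
Qed.

Lemma gap_ivl_of_gap i m : (i < lN L)%nat -> gap_ivl M (lr L i + IZR m) (lnext L i + IZR m).
Proof.
  intros hi. apply gap_ivl_shift.
  pose proof (layout_bounds L (proj1 HR) i hi).
  split; [lra|]. split.
  { apply inX_kset. exists (lab L i). rewrite <- (Rplus_0_r (lr L i)).
    apply (kset_component M L HR); auto; lra. }
  split.
  { apply inX_kset. exists (lab L (nxt L i)). apply (kset_lnext M L HR i hi). }
  intros y hy hX. apply (inX_component M L HR y) in hX. destruct hX as (j & n & hj & hn).
  apply (gap_not_component L (proj1 HR) i j y n hi hj hy hn).
Qed.

Lemma gapS_not_inX i y : (i < lN L)%nat -> gapS L i y -> ~ inX M y.
Proof.
  intros hi hy. destruct (gapS_lift L i y hy) as [n hn].
  apply (gap_ivl_of_gap i n hi); auto.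
Qed.

Lemma gap_ivl_is_gap l r : gap_ivl M l r ->
  exists i m, (i < lN L)%nat /\ l = lr L i + IZR m /\ r = lnext L i + IZR m.
Proof.
  intros HG. pose proof HG as (h1 & h2 & h3 & h4).
  apply (inX_component M L HR l) in h2. destruct h2 as (j & m & hj & hm).
  exists j, (- m)%Z. split; auto. rewrite opp_IZR.
  assert (El : l + IZR m = lr L j).
  { destruct (Req_dec (l + IZR m) (lr L j)) as [e|e]; auto. exfalso.
    set (d := Rmin (lr L j - (l + IZR m)) (r - l) / 2).
    assert (0 < d /\ d < lr L j - (l + IZR m) /\ d < r - l) by
      (unfold d; pose proof (Rmin_l (lr L j - (l + IZR m)) (r - l));
       pose proof (Rmin_r (lr L j - (l + IZR m)) (r - l));
       assert (0 < Rmin (lr L j - (l + IZR m)) (r - l)) by (apply Rmin_glb_lt; lra); lra).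
    apply (h4 (l + d)); [lra|]. apply (inX_component M L HR). exists j, m. split; auto. lra. }
  split; [lra|].
  pose proof (gap_ivl_of_gap j (- m) hj) as Gj. rewrite opp_IZR in Gj.
  replace (lr L j + - IZR m) with l in Gj by lra.
  exact (gap_ivl_same_left M l r _ HG Gj).
Qed.

Lemma principal_ivl_of_gap i m : principal L i ->
  principal_ivl M (lr L i + IZR m) (lnext L i + IZR m).
Proof.
  intros [hi hp]. split; [apply gap_ivl_of_gap; auto|].
  destruct hp as [h|h]; [left|right].
  - change (kset M KA (lr L i + IZR m)). rewrite <- h. apply (kset_component M L HR); auto.
    pose proof (layout_bounds L (proj1 HR) i hi). lra.
  - change (kset M KA (lnext L i + IZR m)). rewrite <- h.
    apply (kset_shift M L HR). apply (kset_lnext M L HR i hi).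
Qed.

Lemma principal_of_principal_ivl i m : (i < lN L)%nat ->
  principal_ivl M (lr L i + IZR m) (lnext L i + IZR m) -> principal L i.
Proof.
  intros hi [_ h]. split; auto. destruct h as [h|h]; [left|right].
  - apply (kset_component_lab M L HR i (lr L i) m KA hi); auto.
    pose proof (layout_bounds L (proj1 HR) i hi). lra.
  - apply (kset_unique M L HR _ _ (lnext L i) (proj1 (kset_lnext M L HR i hi))).
    apply (kset_shift M L HR KA _ m). exact h.
Qed.

Lemma principal_gapS_ivl j z : principal L j -> gapS L j z ->
  exists m, in_ivl (principal_ivl M) z (lr L j + IZR m) (lnext L j + IZR m).
Proof.
  intros Pj hz. destruct (gapS_lift L j z hz) as [m hm].
  exists m. split; auto. apply principal_ivl_of_gap; auto.
Qed.

Lemma principal_gap_ivl j y l r : principal L j -> gapS L j y ->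
  in_ivl (gap_ivl M) y l r -> in_ivl (principal_ivl M) y l r.
Proof.
  intros Pj hy hI. destruct (principal_gapS_ivl j y Pj hy) as [m hm].
  destruct (gap_ivl_disjoint M y l r _ _ hI (in_principal_ivl_gap M y _ _ hm)) as [-> ->].
  exact hm.
Qed.

Hypothesis Halt : forall i, (i < lN L)%nat -> lab L i <> lab L (nxt L i).

Lemma gap_ivl_kinds l r : gap_ivl M l r ->
  exists Kl Kr, Kl <> Kr /\ kset M Kl l /\ kset M Kr r.
Proof.
  intros HG. destruct (gap_ivl_is_gap l r HG) as (i & m & hi & -> & ->).
  exists (lab L i), (lab L (nxt L i)). split; [apply Halt; auto|]. split.
  - apply (kset_component M L HR); auto. pose proof (layout_bounds L (proj1 HR) i hi). lra.
  - apply (kset_shift M L HR). apply (kset_lnext M L HR i hi).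
Qed.

Lemma gap_ivl_not_both_A l r : gap_ivl M l r -> setA M l -> setA M r -> False.
Proof.
  intros HG hl hr. destruct (gap_ivl_kinds l r HG) as (Kl & Kr & hK & kl & kr).
  pose proof (kset_unique M L HR _ KA _ kl hl). pose proof (kset_unique M L HR _ KA _ kr hr).
  subst; auto.
Qed.

End GapIntervals.

Section GapImage.
Variables (M : msys) (L : layout) (f : R -> R) (i j : nat) (m : Z).
Hypothesis HR : realizes M L.
Hypothesis Hf : is_circ_homeo f.
Hypotheses (hi : (i < lN L)%nat) (hj : (j < lN L)%nat).
Hypothesis HS : seteq (img f (gapS L i)) (gapS L j).

Let l := lr L i + IZR m.
Let r := lnext L i + IZR m.

Lemma gap_image_inside l2 r2 x0 : gap_ivl M l2 r2 -> l < x0 < r -> l2 < f x0 < r2 ->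
  l2 <= f l /\ f r <= r2.
Proof.
  intros G2 hx0 hfx0. destruct Hf as (Hc & Hi & _).
  assert (Hin : forall x, l < x < r -> ~ inX M (f x)).
  { intros x hx. apply (gapS_not_inX M L HR j _ hj), HS, img_self.
    apply (lift_gapS L i x m). unfold l, r in hx. lra. }
  destruct G2 as (_ & X2l & X2r & _). split.
  - destruct (Rle_dec l2 (f l)) as [|c]; auto. exfalso.
    destruct (IVT_strict_incr f Hc Hi l x0 l2 ltac:(lra) ltac:(lra)) as (x & hx & ex).
    apply (Hin x); [lra|]. rewrite ex. exact X2l.
  - destruct (Rle_dec (f r) r2) as [|c]; auto. exfalso.
    destruct (IVT_strict_incr f Hc Hi x0 r r2 ltac:(lra) ltac:(lra)) as (x & hx & ex).
    apply (Hin x); [lra|]. rewrite ex. exact X2r.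
Qed.

Lemma gap_image_lifts y : gapS L j y -> exists u : Z, f l + IZR u < y < f r + IZR u.
Proof.
  intros hy. destruct Hf as (_ & Hi & Hp).
  apply HS in hy. destruct hy as (x & hx & [t ->]). destruct (gapS_lift L i x hx) as [n hn].
  exists (n - m + t)%Z. rewrite !plus_IZR.
  assert (hfx : f (l + IZR (n - m)) < f x < f (r + IZR (n - m)))
    by (unfold l, r; rewrite minus_IZR; split; apply Hi; lra).
  rewrite !(lift_shift_int f Hp) in hfx. lra.
Qed.

Lemma gap_image_endpoints :
  exists m', f l = lr L j + IZR m' /\ f r = lnext L j + IZR m'.
Proof.
  pose proof Hf as (Hc & Hi & _).
  assert (hlr : l < r) by apply (gap_ivl_of_gap M L HR i m hi).
  assert (hf : f l < f r) by (apply Hi; auto).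
  destruct (IVT_strict_incr f Hc Hi l r ((f l + f r) / 2) hlr ltac:(lra)) as (x0 & hx0 & e0).
  assert (hz0 : gapS L j (f x0)).
  { apply HS, img_self. apply (lift_gapS L i x0 m). unfold l, r in hx0. lra. }
  destruct (gapS_lift L j _ hz0) as [m' hm']. exists m'.
  set (l2 := lr L j + IZR m') in *. set (r2 := lnext L j + IZR m') in *.
  pose proof (gap_ivl_of_gap M L HR j m' hj) as Gj. fold l2 r2 in Gj.
  pose proof (gap_ivl_length M L HR _ _ Gj) as hlen. pose proof (proj1 Gj) as hlr2.
  destruct (gap_image_inside l2 r2 x0 Gj hx0 hm') as [A B].
  (* f l and f r lie in [l2, r2], of length <= 1, so the translate of (f l, f r)
     containing y is the trivial one *)
  assert (Cover : forall y, l2 < y < r2 -> f l < y < f r).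
  { intros y hy. destruct (gap_image_lifts y (lift_gapS L j y m' hy)) as [u hu].
    destruct (Z.eq_dec u 0) as [->|nu]; [simpl in hu; lra|].
    destruct (Z_lt_le_dec u 0) as [c|c].
    - assert (IZR u <= -1) by (apply IZR_le; lia). lra.
    - assert (1 <= IZR u) by (apply IZR_le; lia). lra. }
  split.
  - destruct (Rle_lt_dec (f l) l2) as [C|C]; [lra|]. exfalso.
    pose proof (Cover ((l2 + f l) / 2) ltac:(lra)). lra.
  - destruct (Rle_lt_dec r2 (f r)) as [D|D]; [lra|]. exfalso.
    pose proof (Cover ((r2 + f r) / 2) ltac:(lra)). lra.
Qed.

End GapImage.

Lemma img_agree M (f g : R -> R) (S T : cset) :
  (forall x, S x -> inX M x) -> (forall x, inX M x -> f x = g x) ->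
  seteq (img f S) T <-> seteq (img g S) T.
Proof.
  intros HS Hfg. split; intros h y; rewrite <- (h y);
    split; intros (x & hx & e); exists x; split; auto; rewrite Hfg in * by auto; auto.
Qed.

Lemma img_gap_incl M L (f g : R -> R) i : realizes M L ->
  is_circ_homeo f -> strict_increasing g -> (forall x, inX M x -> f x = g x) -> (i < lN L)%nat ->
  forall y, img g (gapS L i) y -> img f (gapS L i) y.
Proof.
  intros HR (Hcf & Hif & _) Hig Hfg hi y (x & hx & ex).
  destruct (gapS_lift L i x hx) as [m hm].
  pose proof (gap_ivl_of_gap M L HR i m hi) as (hlr & Xl & Xr & _).
  assert (hgx : g (lr L i + IZR m) < g x < g (lnext L i + IZR m)) by (split; apply Hig; lra).
  rewrite <- (Hfg (lr L i + IZR m)), <- (Hfg (lnext L i + IZR m)) in hgx by auto.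
  destruct (IVT_strict_incr f Hcf Hif _ _ (g x) hlr hgx) as (x' & hx' & e).
  exists x'. split; [apply (lift_gapS L i x' m); auto|]. rewrite e; auto.
Qed.

Lemma img_gap_agree M L (f g : R -> R) i T : realizes M L ->
  is_circ_homeo f -> is_circ_homeo g -> (forall x, inX M x -> f x = g x) -> (i < lN L)%nat ->
  seteq (img f (gapS L i)) T <-> seteq (img g (gapS L i)) T.
Proof.
  intros HR Hf Hg Hfg hi.
  assert (E : forall y, img f (gapS L i) y <-> img g (gapS L i) y).
  { intro y. split.
    - apply (img_gap_incl M L g f i HR Hg (proj1 (proj2 Hf))); auto.
      intros x hx. symmetry; auto.
    - exact (img_gap_incl M L f g i HR Hf (proj1 (proj2 Hg)) Hfg hi y). }
  split; intros h y; rewrite <- (h y); [symmetry|]; apply E.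
Qed.

Lemma clos_refl_trans_incl {A} (R1 R2 : relation A) :
  inclusion A R1 R2 -> inclusion A (clos_refl_trans A R1) (clos_refl_trans A R2).
Proof.
  intros H x y h. induction h; [apply rt_step, H; auto|apply rt_refl|eapply rt_trans; eauto].
Qed.

(** * The modified system *)

(* Off X the value [KBi] is junk; [kind_at] is only used at points of X. *)
Definition kind_at (M : msys) (x : R) : kind :=
  if excluded_middle_informative (setA M x) then KA
  else if excluded_middle_informative (setB M x) then KB else KBi.

Lemma kind_at_kset M L K x : realizes M L -> kset M K x -> kind_at M x = K.
Proof.
  intros HR h. unfold kind_at.
  destruct excluded_middle_informative as [hA|nA].
  { exact (kset_unique M L HR KA K x hA h). }
  destruct excluded_middle_informative as [hB|nB].
  { exact (kset_unique M L HR KB K x hB h). }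
  destruct K; simpl in h; tauto.
Qed.

Lemma kind_at_shift M L x m : realizes M L -> inX M x -> kind_at M (x + IZR m) = kind_at M x.
Proof.
  intros HR hx. apply inX_kset in hx as [K hK].
  rewrite !(kind_at_kset M L K); auto. apply (kset_shift M L HR); auto.
Qed.

Definition b_kind (K : kind) : kind := match K with KA => KB | KB => KBi | KBi => KA end.

(* The gap types (a,b) -> (b,b^-1) -> (b^-1,a) and (b,a) -> (b^-1,b) -> (a,b^-1)
   form the b-orbits; along each the three reparametrizations compose to the identity. *)
Definition b_rho (Kl Kr : kind) (s : R) : R :=
  match Kl, Kr with
  | _, KBi => s * s
  | KBi, _ => sqrt s
  | _, _ => s
  end.

Lemma b_rho_range Kl Kr s : 0 < s < 1 -> 0 < b_rho Kl Kr s < 1.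
Proof.
  intros h. assert (0 < sqrt s < 1).
  { split; [apply sqrt_lt_R0; lra|]. rewrite <- sqrt_1. apply sqrt_lt_1; lra. }
  destruct Kl, Kr; simpl; nra.
Qed.

Lemma b_rho_incr Kl Kr s t : 0 < s -> s < t -> t < 1 -> b_rho Kl Kr s < b_rho Kl Kr t.
Proof.
  intros h1 h2 h3. assert (sqrt s < sqrt t) by (apply sqrt_lt_1; lra).
  destruct Kl, Kr; simpl; nra.
Qed.

Lemma b_rho_cycle Kl Kr s : Kl <> Kr -> 0 < s < 1 ->
  b_rho (b_kind (b_kind Kl)) (b_kind (b_kind Kr))
    (b_rho (b_kind Kl) (b_kind Kr) (b_rho Kl Kr s)) = s.
Proof.
  intros hK hs. assert (sqrt (s * s) = s) by (apply sqrt_square; lra).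
  assert (sqrt s * sqrt s = s) by (apply sqrt_sqrt; lra).
  destruct Kl, Kr; simpl; congruence.
Qed.

Definition b_mod (M : msys) : R -> R :=
  reparam (mb M) (gap_ivl M) (fun l r => b_rho (kind_at M l) (kind_at M r)).

Definition a_mod (M : msys) : R -> R := reparam (ma M) (principal_ivl M) (fun _ _ s => s).

Definition Mstar (M : msys) : msys := MSys (a_mod M) (b_mod M) (setA M) (setB M) (setBi M).

Lemma Mstar_equivalent M L : realizes M L -> equivalent M (Mstar M).
Proof.
  intros HR. exists (fun x => x).
  split; [split; [exact (derivable_continuous id derivable_id)|split; auto]|].
  assert (G : forall K, seteq (img (fun x => x) (kset M K)) (kset M K)).
  { intros K y. split.
    - intros (x & hx & ex). apply (kset_eqc M L HR K x); auto.
    - intros h. exact (img_self (fun x => x) _ y h). }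
  exact (conj (G KA) (conj (G KB) (G KBi))).
Qed.

(** * Contraction estimates *)

Definition pot (K : kind) (s : R) : R := match K with KA => s | _ => 1 - s end.

(* For a principal gap (l, r): the distance from y to its [a]-end, relative to r - l. *)
Definition potential (M : msys) (l r y : R) : R := pot (kind_at M l) ((y - l) / (r - l)).

Lemma pot_range K s : 0 < s < 1 -> 0 < pot K s < 1.
Proof. destruct K; simpl; lra. Qed.

Lemma potential_range M l r y : l < y < r -> 0 < potential M l r y < 1.
Proof. intros h. apply pot_range, rel_pos_range, h. Qed.

Lemma pow_between_0_1 c n : 0 <= c <= 1 -> 0 <= c ^ n <= 1.
Proof. intros h. split; [apply pow_le; lra|rewrite <- (pow1 n); apply pow_incr; lra]. Qed.

Lemma pow_le_base c n : 0 <= c <= 1 -> (0 < n)%nat -> c ^ n <= c.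
Proof.
  intros h hn. destruct n as [|n]; [lia|]. simpl.
  pose proof (pow_between_0_1 c n h). nra.
Qed.

Definition contracts (q q' : R) : Prop := q' = q * q \/ q' = 1 - sqrt (1 - q).

Lemma b_rho_principal Kl Kr s : 0 < s < 1 -> Kl <> Kr ->
  (Kl = KA \/ Kr = KA) -> (b_kind Kl = KA \/ b_kind Kr = KA) ->
  contracts (pot Kl s) (1 - pot (b_kind Kl) (b_rho Kl Kr s)).
Proof.
  intros hs hK HP HP'. unfold contracts.
  destruct Kl, Kr; simpl in *; try congruence; try (destruct HP; discriminate);
    try (destruct HP'; discriminate).
  - left. ring.
  - right. replace (1 - (1 - s)) with s by ring. ring.
Qed.

Lemma b_rho2_principal Kl Kr s : 0 < s < 1 -> Kl <> Kr ->
  (Kl = KA \/ Kr = KA) -> (b_kind (b_kind Kl) = KA \/ b_kind (b_kind Kr) = KA) ->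
  contracts (pot Kl s)
    (1 - pot (b_kind (b_kind Kl)) (b_rho (b_kind Kl) (b_kind Kr) (b_rho Kl Kr s))).
Proof.
  intros hs hK HP HP'. unfold contracts.
  destruct Kl, Kr; simpl in *; try congruence; try (destruct HP; discriminate);
    try (destruct HP'; discriminate).
  - left. ring.
  - right. replace (1 - (1 - s)) with s by ring. ring.
Qed.

Definition contraction_factor (p0 : R) : R := Rmax p0 (/ (1 + sqrt (1 - p0))).

Lemma contraction_factor_range p0 : 0 <= p0 < 1 -> 0 <= contraction_factor p0 < 1.
Proof.
  intros h. assert (0 < sqrt (1 - p0)) by (apply sqrt_lt_R0; lra).
  assert (hinv : / (1 + sqrt (1 - p0)) < / 1) by (apply Rinv_lt_contravar; lra).
  rewrite Rinv_1 in hinv.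
  unfold contraction_factor. split.
  - apply Rle_trans with p0; [lra|apply Rmax_l].
  - apply Rmax_lub_lt; lra.
Qed.

(* q^2 <= p0 q, and 1 - sqrt (1 - q) = q / (1 + sqrt (1 - q)) <= q / (1 + sqrt (1 - p0)). *)
Lemma contracts_bound q q' p0 : 0 < q < 1 -> q <= p0 -> p0 < 1 ->
  contracts q q' -> q' <= contraction_factor p0 * q.
Proof.
  intros hq hp0 hp1 [->| ->]; unfold contraction_factor.
  - pose proof (Rmax_l p0 (/ (1 + sqrt (1 - p0)))). nra.
  - set (t := sqrt (1 - q)). set (t0 := sqrt (1 - p0)).
    assert (tt : t * t = 1 - q) by (apply sqrt_sqrt; lra).
    assert (ht : t0 <= t) by (apply sqrt_le_1_alt; lra).
    assert (ht0 : 0 < t0) by (apply sqrt_lt_R0; lra).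
    assert (ht1 : t <= 1) by (rewrite <- sqrt_1; apply sqrt_le_1_alt; lra).
    assert (hi : 0 < / (1 + t0)) by (apply Rinv_0_lt_compat; lra).
    assert (E : (1 - t) * (1 + t0) <= q) by nra.
    assert (1 - t <= q * / (1 + t0)).
    { replace (1 - t) with ((1 - t) * (1 + t0) * / (1 + t0)) by (field; lra).
      apply Rmult_le_compat_r; lra. }
    pose proof (Rmax_r p0 (/ (1 + t0))). fold t0. nra.
Qed.

(** * Properties of the modified system *)

Section MarkovSystem.
Variables (M : msys) (L : layout).
Hypothesis Ha : is_circ_homeo (ma M).
Hypothesis Ha2 : forall x, eqc (ma M (ma M x)) x.
Hypothesis Hb : is_circ_homeo (mb M).
Hypothesis Hb3 : forall x, eqc (mb M (mb M (mb M x))) x.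
Hypothesis Hb_nontriv : exists x, ~ eqc (mb M x) x.
Hypothesis HR : realizes M L.
Hypothesis Halt : forall i, (i < lN L)%nat -> lab L i <> lab L (nxt L i).
Hypothesis HaA : seteq (img (ma M) (setA M)) (bblocks L).
Hypothesis HbA : seteq (img (mb M) (setA M)) (setB M).
Hypothesis HbB : seteq (img (mb M) (setB M)) (setBi M).
Hypothesis HaE : forall i, principal L i ->
  exists j, principal L j /\ seteq (img (ma M) (gapS L i)) (gapS L j).

Lemma kset_b K p : kset M K p -> kset M (b_kind K) (mb M p).
Proof.
  intros h. destruct K; simpl in *.
  - apply HbA, img_self; auto.
  - apply HbB, img_self; auto.
  - apply HbB in h. destruct h as (x & hx & ex).
    apply HbA in hx. destruct hx as (w & hw & ew).
    apply (kset_eqc M L HR KA w); auto.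
    pose proof (proj2 (proj2 Hb)) as Hp.
    apply eqc_trans with (mb M (mb M (mb M w))); [apply eqc_sym, Hb3|].
    apply eqc_lift; [exact Hp|].
    apply eqc_trans with (mb M x); [apply eqc_lift; [exact Hp|exact ew]|exact ex].
Qed.

Lemma inX_b x : inX M x -> inX M (mb M x).
Proof.
  rewrite !inX_kset. intros [K h]. exists (b_kind K). apply kset_b; auto.
Qed.

Lemma inX_b_preimage y : inX M y -> exists x, inX M x /\ mb M x = y.
Proof.
  intros hy. destruct (Hb3 y) as [m e]. exists (mb M (mb M y) + IZR m). split.
  - apply (inX_shift M L HR). do 2 apply inX_b. exact hy.
  - rewrite (circ_homeo_shift _ Hb). lra.
Qed.

Lemma gap_ivl_b l r : gap_ivl M l r -> gap_ivl M (mb M l) (mb M r).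
Proof.
  intros (h1 & h2 & h3 & h4). pose proof (proj1 (proj2 Hb)) as Hi.
  split; [apply Hi; auto|]. split; [apply inX_b; auto|]. split; [apply inX_b; auto|].
  intros y hy hX. destruct (inX_b_preimage y hX) as (x & hx & <-).
  apply (h4 x); auto. split; apply (strict_incr_lt_inv _ Hi); lra.
Qed.

Lemma gap_ivl_b3 l r : gap_ivl M l r ->
  exists m, mb M (mb M (mb M l)) = l + IZR m /\ mb M (mb M (mb M r)) = r + IZR m.
Proof.
  intros HG. destruct (Hb3 l) as [m e].
  assert (El : mb M (mb M (mb M l)) = l + IZR (- m)) by (rewrite opp_IZR; lra).
  exists (- m)%Z. split; auto.
  eapply (gap_ivl_shift_same_left M L HR l r _ _ _ HG); [do 3 apply gap_ivl_b; exact HG|exact El].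
Qed.

Lemma gap_ivl_b_preimage y l r :
  in_ivl (gap_ivl M) (mb M y) l r -> exists l' r', in_ivl (gap_ivl M) y l' r'.
Proof.
  intros [hG hy]. pose proof (proj1 (proj2 Hb)) as Hi.
  destruct (Hb3 y) as [m e].
  exists (mb M (mb M l) + IZR m), (mb M (mb M r) + IZR m). split.
  - apply (gap_ivl_shift M L HR). do 2 apply gap_ivl_b; auto.
  - assert (mb M (mb M l) < mb M (mb M (mb M y)) < mb M (mb M r)) by (split; do 2 apply Hi; lra).
    lra.
Qed.

Lemma b_mod_inX x : inX M x -> b_mod M x = mb M x.
Proof.
  intros h. apply reparam_out. intros (l & r & (_ & _ & _ & hg) & hx). exact (hg x hx h).
Qed.

Lemma b_mod_gap x l r Kl Kr : in_ivl (gap_ivl M) x l r -> kset M Kl l -> kset M Kr r ->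
  in_ivl (gap_ivl M) (b_mod M x) (mb M l) (mb M r) /\
  (b_mod M x - mb M l) / (mb M r - mb M l) = b_rho Kl Kr ((x - l) / (r - l)) /\
  kset M (b_kind Kl) (mb M l) /\ kset M (b_kind Kr) (mb M r).
Proof.
  intros hx hl hr. pose proof (proj1 (proj2 Hb)) as Hi.
  assert (E : b_mod M x = mb M l + (mb M r - mb M l) * b_rho Kl Kr ((x - l) / (r - l))).
  { unfold b_mod. rewrite (reparam_in _ _ _ (gap_ivl_disjoint M) x l r hx).
    rewrite (kind_at_kset M L Kl l HR hl), (kind_at_kset M L Kr r HR hr). reflexivity. }
  destruct hx as [hG hx].
  pose proof (b_rho_range Kl Kr _ (rel_pos_range l r x hx)).
  assert (mb M l < mb M r) by (apply Hi; apply hG).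
  split; [split; [apply gap_ivl_b; auto|]; rewrite E; nra|].
  split; [rewrite E; apply rel_pos_affine; auto|].
  split; apply kset_b; auto.
Qed.

Lemma b_mod_gap_ivl x l r : in_ivl (gap_ivl M) x l r ->
  in_ivl (gap_ivl M) (b_mod M x) (mb M l) (mb M r).
Proof.
  intros hx. destruct (gap_ivl_kinds M L HR Halt l r (proj1 hx)) as (Kl & Kr & _ & hl & hr).
  exact (proj1 (b_mod_gap x l r Kl Kr hx hl hr)).
Qed.

Lemma b_mod_incr : strict_increasing (b_mod M).
Proof.
  apply reparam_incr; [apply gap_ivl_disjoint|exact (proj1 (proj2 Hb))|..];
    intros; [apply b_rho_range|apply b_rho_incr]; auto.
Qed.

Lemma b_mod_periodic x : b_mod M (x + 1) = b_mod M x + 1.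
Proof.
  apply reparam_periodic;
    [apply gap_ivl_disjoint|exact (proj2 (proj2 Hb))|exact (gap_ivl_shift M L HR)|].
  intros l r s (_ & hl & hr & _).
  rewrite (kind_at_shift M L l 1), (kind_at_shift M L r 1); auto.
Qed.

Lemma b_mod_cube x : eqc (b_mod M (b_mod M (b_mod M x))) x.
Proof.
  destruct (classic (exists l r, in_ivl (gap_ivl M) x l r)) as [[l [r hx]]|nx].
  - destruct (gap_ivl_kinds M L HR Halt l r (proj1 hx)) as (Kl & Kr & hK & hl & hr).
    destruct (b_mod_gap x l r Kl Kr hx hl hr) as (I1 & F1 & k1l & k1r).
    destruct (b_mod_gap _ _ _ _ _ I1 k1l k1r) as (I2 & F2 & k2l & k2r).
    destruct (b_mod_gap _ _ _ _ _ I2 k2l k2r) as (I3 & F3 & _ & _).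
    rewrite F2, F1, b_rho_cycle in F3 by (auto; apply rel_pos_range, hx).
    destruct (gap_ivl_b3 l r (proj1 hx)) as (m & e1 & e2). rewrite e1, e2 in F3.
    apply eqc_sym. exists m. exact (rel_pos_shift_eq l r (IZR m) x _ (proj1 (proj1 hx)) F3).
  - assert (n1 : ~ (exists l r, in_ivl (gap_ivl M) (mb M x) l r)).
    { intros [l [r h]]. apply nx. apply (gap_ivl_b_preimage x l r h). }
    assert (n2 : ~ (exists l r, in_ivl (gap_ivl M) (mb M (mb M x)) l r)).
    { intros [l [r h]]. apply n1. apply (gap_ivl_b_preimage _ l r h). }
    unfold b_mod.
    rewrite (reparam_out _ _ _ _ nx), (reparam_out _ _ _ _ n1), (reparam_out _ _ _ _ n2).
    apply Hb3.
Qed.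

Lemma b_mod_homeo : is_circ_homeo (b_mod M).
Proof.
  split; [|split; [exact b_mod_incr|exact b_mod_periodic]].
  apply continuity_incr_surj; [exact b_mod_incr|]. intros y.
  destruct (b_mod_cube y) as [m e].
  exists (b_mod M (b_mod M y) + IZR m). rewrite (lift_shift_int _ b_mod_periodic). auto.
Qed.

Lemma principal_ivl_a l r : principal_ivl M l r -> principal_ivl M (ma M l) (ma M r).
Proof.
  intros HP. destruct (gap_ivl_is_gap M L HR l r (proj1 HP)) as (i & m & hi & -> & ->).
  pose proof (principal_of_principal_ivl M L HR i m hi HP) as Pi.
  destruct (HaE i Pi) as (j & Pj & HS).
  destruct (gap_image_endpoints M L (ma M) i j m HR Ha hi (proj1 Pj) HS) as (m' & -> & ->).
  apply principal_ivl_of_gap; auto.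
Qed.

Lemma bblocks_not_A x : bblocks L x -> ~ setA M x.
Proof.
  intros h hA. destruct h as [h|[h|(i & [hi _] & hg)]].
  - apply (kset_inU M L HR KB) in h. discriminate (kset_unique M L HR KA KB x hA h).
  - apply (kset_inU M L HR KBi) in h. discriminate (kset_unique M L HR KA KBi x hA h).
  - apply (gapS_not_inX M L HR i x hi hg). left; exact hA.
Qed.

Lemma principal_ivl_a_swaps_A l r : principal_ivl M l r -> (setA M (ma M l) <-> ~ setA M l).
Proof.
  intros HP. assert (G : forall x, setA M x -> ~ setA M (ma M x)).
  { intros x hx. apply bblocks_not_A, HaA, img_self; auto. }
  split.
  - intros h hl. exact (G l hl h).
  - intros hl. destruct (principal_ivl_a l r HP) as [_ [h|h]]; auto.
    destruct HP as [_ [h'|h']]; [tauto|]. exfalso; exact (G r h' h).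
Qed.

Lemma principal_ivl_a2 l r : principal_ivl M l r ->
  exists m, ma M (ma M l) = l + IZR m /\ ma M (ma M r) = r + IZR m.
Proof.
  intros HP. destruct (Ha2 l) as [m e].
  assert (El : ma M (ma M l) = l + IZR (- m)) by (rewrite opp_IZR; lra).
  exists (- m)%Z. split; auto.
  eapply (gap_ivl_shift_same_left M L HR l r _ _ _ (proj1 HP)); [|exact El].
  do 2 apply principal_ivl_a; exact HP.
Qed.

Lemma principal_ivl_a_preimage y l r :
  in_ivl (principal_ivl M) (ma M y) l r -> exists l' r', in_ivl (principal_ivl M) y l' r'.
Proof.
  intros [hP hy]. pose proof (proj1 (proj2 Ha)) as Hi. destruct (Ha2 y) as [m e].
  exists (ma M l + IZR m), (ma M r + IZR m). split.
  - apply (principal_ivl_shift M L HR), principal_ivl_a; auto.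
  - assert (ma M l < ma M (ma M y) < ma M r) by (split; apply Hi; lra). lra.
Qed.

Lemma a_mod_inX x : inX M x -> a_mod M x = ma M x.
Proof.
  intros h. apply reparam_out. intros (l & r & ((_ & _ & _ & hg) & _) & hx). exact (hg x hx h).
Qed.

Lemma a_mod_gap x l r : in_ivl (principal_ivl M) x l r ->
  in_ivl (principal_ivl M) (a_mod M x) (ma M l) (ma M r) /\
  (a_mod M x - ma M l) / (ma M r - ma M l) = (x - l) / (r - l).
Proof.
  intros hx. pose proof (proj1 (proj2 Ha)) as Hi.
  assert (E : a_mod M x = ma M l + (ma M r - ma M l) * ((x - l) / (r - l)))
    by exact (reparam_in _ _ _ (principal_ivl_disjoint M) x l r hx).
  destruct hx as [hP hx]. pose proof (rel_pos_range l r x hx).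
  assert (ma M l < ma M r) by (apply Hi, hP).
  split; [split; [apply principal_ivl_a; auto|]; rewrite E; nra|].
  rewrite E; apply rel_pos_affine; auto.
Qed.

Lemma a_mod_incr : strict_increasing (a_mod M).
Proof.
  apply reparam_incr; [apply principal_ivl_disjoint|exact (proj1 (proj2 Ha))|..]; intros; lra.
Qed.

Lemma a_mod_periodic x : a_mod M (x + 1) = a_mod M x + 1.
Proof.
  apply reparam_periodic; [apply principal_ivl_disjoint|exact (proj2 (proj2 Ha))| |easy].
  exact (principal_ivl_shift M L HR).
Qed.

Lemma a_mod_involutive x : eqc (a_mod M (a_mod M x)) x.
Proof.
  destruct (classic (exists l r, in_ivl (principal_ivl M) x l r)) as [[l [r hx]]|nx].
  - destruct (a_mod_gap x l r hx) as (I1 & F1).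
    destruct (a_mod_gap _ _ _ I1) as (_ & F2).
    destruct (principal_ivl_a2 l r (proj1 hx)) as (m & e1 & e2).
    rewrite F1, e1, e2 in F2.
    apply eqc_sym. exists m. exact (rel_pos_shift_eq l r (IZR m) x _ (proj1 (proj1 (proj1 hx))) F2).
  - assert (n1 : ~ (exists l r, in_ivl (principal_ivl M) (ma M x) l r)).
    { intros [l [r h]]. apply nx. apply (principal_ivl_a_preimage x l r h). }
    unfold a_mod. rewrite (reparam_out _ _ _ _ nx), (reparam_out _ _ _ _ n1). apply Ha2.
Qed.

Lemma a_mod_homeo : is_circ_homeo (a_mod M).
Proof.
  split; [|split; [exact a_mod_incr|exact a_mod_periodic]].
  apply continuity_incr_surj; [exact a_mod_incr|]. intros y.
  destruct (a_mod_involutive y) as [m e].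
  exists (a_mod M y + IZR m). rewrite (lift_shift_int _ a_mod_periodic). auto.
Qed.

Lemma Mstar_img_gap_a i T : (i < lN L)%nat ->
  seteq (img (a_mod M) (gapS L i)) T <-> seteq (img (ma M) (gapS L i)) T.
Proof. apply (img_gap_agree M L); auto using a_mod_homeo, a_mod_inX. Qed.

Lemma Mstar_img_gap_b i T : (i < lN L)%nat ->
  seteq (img (b_mod M) (gapS L i)) T <-> seteq (img (mb M) (gapS L i)) T.
Proof. apply (img_gap_agree M L); auto using b_mod_homeo, b_mod_inX. Qed.

Lemma ex_principal_iff (P Q : nat -> Prop) : (forall j, principal L j -> P j <-> Q j) ->
  (exists j, principal L j /\ P j) <-> (exists j, principal L j /\ Q j).
Proof. intros H. split; intros (j & Pj & h); exists j; split; auto; apply (H j Pj); auto. Qed.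

Lemma Mstar_gap_adj i j : gap_adj (Mstar M) L i j <-> gap_adj M L i j.
Proof.
  unfold gap_adj; simpl. split; intros (Pi & Pj & h); do 2 (split; auto);
    rewrite ?(Mstar_img_gap_a i), ?(Mstar_img_gap_b i), ?(Mstar_img_gap_b j) in *;
    try apply Pi; try apply Pj; exact h.
Qed.

Lemma b_mod_nontriv : exists x, ~ eqc (b_mod M x) x.
Proof.
  destruct (classic (exists p, inX M p)) as [[p hp]|np].
  - exists p. rewrite b_mod_inX by auto. intro e.
    apply inX_kset in hp as [K hK].
    pose proof (kset_unique M L HR _ _ _ hK (kset_eqc M L HR _ _ _ e (kset_b K p hK))).
    destruct K; discriminate.
  - destruct Hb_nontriv as [x hx]. exists x. unfold b_mod. rewrite reparam_out; auto.
    intros (l & r & [(_ & hl & _) _]). apply np; exists l; auto.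
Qed.

Lemma kind_at_A x : kind_at M x = KA <-> setA M x.
Proof.
  unfold kind_at. destruct excluded_middle_informative as [h|h]; [tauto|].
  destruct excluded_middle_informative; split; intro; congruence || tauto.
Qed.

Lemma principal_ivl_kinds l r Kl Kr : principal_ivl M l r -> kset M Kl l -> kset M Kr r ->
  Kl = KA \/ Kr = KA.
Proof.
  intros [_ [h|h]] hl hr.
  - left. exact (kset_unique M L HR Kl KA l hl h).
  - right. exact (kset_unique M L HR Kr KA r hr h).
Qed.

Lemma potential_kset l r y K : kset M K l -> potential M l r y = pot K ((y - l) / (r - l)).
Proof. intros h. unfold potential. rewrite (kind_at_kset M L K l HR h). reflexivity. Qed.

Lemma potential_shift l r y m : inX M l ->
  potential M (l + IZR m) (r + IZR m) (y + IZR m) = potential M l r y.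
Proof.
  intros hl. unfold potential. rewrite (kind_at_shift M L l m HR hl).
  replace (y + IZR m - (l + IZR m)) with (y - l) by ring.
  replace (r + IZR m - (l + IZR m)) with (r - l) by ring. reflexivity.
Qed.

Lemma a_mod_potential y l r : in_ivl (principal_ivl M) y l r ->
  in_ivl (principal_ivl M) (a_mod M y) (ma M l) (ma M r) /\
  potential M (ma M l) (ma M r) (a_mod M y) = 1 - potential M l r y.
Proof.
  intros hy. destruct (a_mod_gap y l r hy) as [I F]. split; auto.
  unfold potential. rewrite F.
  pose proof (principal_ivl_a_swaps_A l r (proj1 hy)) as Sw. rewrite <- !kind_at_A in Sw.
  destruct (kind_at M l).
  - destruct (kind_at M (ma M l)); simpl; try ring. exfalso. apply (proj1 Sw); auto.
  - rewrite (proj2 Sw) by discriminate. simpl. ring.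
  - rewrite (proj2 Sw) by discriminate. simpl. ring.
Qed.

Lemma b_mod_potential y l r : in_ivl (principal_ivl M) y l r ->
  in_ivl (principal_ivl M) (b_mod M y) (mb M l) (mb M r) ->
  contracts (potential M l r y) (1 - potential M (mb M l) (mb M r) (b_mod M y)).
Proof.
  intros hy hy'. pose proof (in_principal_ivl_gap M y l r hy) as hG.
  destruct (gap_ivl_kinds M L HR Halt l r (proj1 hG)) as (Kl & Kr & hK & kl & kr).
  destruct (b_mod_gap y l r Kl Kr hG kl kr) as (_ & F & k1l & k1r).
  rewrite (potential_kset _ _ _ _ kl), (potential_kset _ _ _ _ k1l), F.
  apply b_rho_principal; [apply rel_pos_range, hy|auto|..].
  - exact (principal_ivl_kinds l r Kl Kr (proj1 hy) kl kr).
  - exact (principal_ivl_kinds _ _ _ _ (proj1 hy') k1l k1r).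
Qed.

Lemma b_mod2_potential y l r : in_ivl (principal_ivl M) y l r ->
  in_ivl (principal_ivl M) (b_mod M (b_mod M y)) (mb M (mb M l)) (mb M (mb M r)) ->
  contracts (potential M l r y)
    (1 - potential M (mb M (mb M l)) (mb M (mb M r)) (b_mod M (b_mod M y))).
Proof.
  intros hy hy'. pose proof (in_principal_ivl_gap M y l r hy) as hG.
  destruct (gap_ivl_kinds M L HR Halt l r (proj1 hG)) as (Kl & Kr & hK & kl & kr).
  destruct (b_mod_gap y l r Kl Kr hG kl kr) as (I1 & F1 & k1l & k1r).
  destruct (b_mod_gap _ _ _ _ _ I1 k1l k1r) as (_ & F2 & k2l & k2r).
  rewrite (potential_kset _ _ _ _ kl), (potential_kset _ _ _ _ k2l), F2, F1.
  apply b_rho2_principal; [apply rel_pos_range, hy|auto|..].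
  - exact (principal_ivl_kinds l r Kl Kr (proj1 hy) kl kr).
  - exact (principal_ivl_kinds _ _ _ _ (proj1 hy') k2l k2r).
Qed.

Lemma cdist_le_potential L' j m w p : realizes M L' -> principal L' j ->
  lr L' j + IZR m < w < lnext L' j + IZR m -> (p = lr L' j \/ p = lnext L' j) -> setA M p ->
  cdist w p <= potential M (lr L' j + IZR m) (lnext L' j + IZR m) w.
Proof.
  intros HR' Pj hw hp hA.
  set (l := lr L' j + IZR m) in *. set (r := lnext L' j + IZR m) in *.
  pose proof (gap_ivl_of_gap M L' HR' j m (proj1 Pj)) as G. fold l r in G.
  pose proof (gap_ivl_length M L' HR' l r G) as hlen.
  assert (El : l = lr L' j + IZR m) by reflexivity.
  assert (Er : r = lnext L' j + IZR m) by reflexivity. clearbody l r.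
  assert (Hd : forall d, 0 < d -> d <= d / (r - l)).
  { intros d hd. apply (Rmult_le_reg_r (r - l)); [lra|]. unfold Rdiv.
    rewrite Rmult_assoc, Rinv_l by lra. nra. }
  unfold potential. destruct hp as [->| ->].
  - assert (hl : setA M l) by (rewrite El; apply (kset_shift M L' HR' KA); exact hA).
    apply kind_at_A in hl. rewrite hl. simpl.
    pose proof (cdist_le w (lr L' j) m ltac:(rewrite Rabs_right; lra)) as hd.
    rewrite Rabs_right in hd by lra. pose proof (Hd (w - l) ltac:(lra)). lra.
  - assert (hr : setA M r) by (rewrite Er; apply (kset_shift M L' HR' KA); exact hA).
    assert (hl : kind_at M l <> KA).
    { rewrite kind_at_A. intro hl. exact (gap_ivl_not_both_A M L HR Halt l r G hl hr). }
    replace (pot (kind_at M l) ((w - l) / (r - l))) with ((r - w) / (r - l))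
      by (destruct (kind_at M l); [congruence| |]; simpl; field; lra).
    pose proof (cdist_le w (lnext L' j) m ltac:(rewrite Rabs_left; lra)) as hd.
    rewrite Rabs_left in hd by lra. pose proof (Hd (r - w) ltac:(lra)). lra.
Qed.

Section Contraction.
Variables (L' : layout) (k : nat) (g g' : nat -> nat) (e : nat -> bool).
Hypothesis HR' : realizes M L'.
Hypothesis VE : valid_enum (Mstar M) L' k g g' e.

Lemma enum_b_gap i w : (i < k)%nat -> gapS L' (g i) w -> gapS L' (g' i) (bsel (Mstar M) e i w).
Proof.
  intros hi hw. destruct VE as (_ & _ & _ & V4). destruct (V4 i hi) as [Vb _].
  unfold bsel; simpl in *. destruct (e i).
  - apply Vb, img_self; auto.
  - destruct (proj2 (Vb w) hw) as (v & hv & ev).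
    assert (eqc v (b_mod M (b_mod M w))) as [m ->].
    { apply (eqc_circ_homeo_inj (b_mod M) _ _ b_mod_homeo).
      apply eqc_trans with w; [exact ev|apply eqc_sym, b_mod_cube]. }
    apply gapS_shift; auto.
Qed.

Lemma enum_a_gap i y : (i < k)%nat -> gapS L' (g' i) y ->
  gapS L' (g (if Nat.ltb (S i) k then S i else O)) (a_mod M y).
Proof.
  intros hi hy. destruct VE as (_ & _ & _ & V4). apply (proj2 (V4 i hi)), img_self; auto.
Qed.

Lemma enum_step i w l r : (i < k)%nat -> gapS L' (g i) w -> in_ivl (principal_ivl M) w l r ->
  let w' := a_mod M (bsel (Mstar M) e i w) in
  gapS L' (g (if Nat.ltb (S i) k then S i else O)) w' /\
  exists l' r', in_ivl (principal_ivl M) w' l' r' /\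
    contracts (potential M l r w) (potential M l' r' w').
Proof.
  intros hi hw hI w'. pose proof (enum_b_gap i w hi hw) as hb.
  pose proof (proj2 (proj1 VE i hi)) as Pg'.
  split; [apply enum_a_gap; auto|].
  pose proof (in_principal_ivl_gap M w l r hI) as hG.
  unfold w', bsel in *; simpl in *. destruct (e i).
  - pose proof (principal_gap_ivl M L' HR' _ _ _ _ Pg' hb (b_mod_gap_ivl w l r hG)) as IP.
    destruct (a_mod_potential _ _ _ IP) as [I2 E2].
    exists (ma M (mb M l)), (ma M (mb M r)). split; auto.
    rewrite E2. apply b_mod_potential; auto.
  - pose proof (principal_gap_ivl M L' HR' _ _ _ _ Pg' hb
      (b_mod_gap_ivl _ _ _ (b_mod_gap_ivl w l r hG))) as IP.
    destruct (a_mod_potential _ _ _ IP) as [I2 E2].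
    exists (ma M (mb M (mb M l))), (ma M (mb M (mb M r))). split; auto.
    rewrite E2. apply b_mod2_potential; auto.
Qed.

Lemma fcomp_potential w l r p0 : (0 < k)%nat -> gapS L' (g O) w -> in_ivl (principal_ivl M) w l r ->
  potential M l r w <= p0 -> p0 < 1 -> forall n, (n <= k)%nat ->
  gapS L' (if Nat.ltb n k then g n else g O) (fcomp (Mstar M) e n w) /\
  exists l' r', in_ivl (principal_ivl M) (fcomp (Mstar M) e n w) l' r' /\
    potential M l' r' (fcomp (Mstar M) e n w) <= contraction_factor p0 ^ n * potential M l r w.
Proof.
  intros hk hw hI hp0 hp1.
  pose proof (potential_range M l r w (proj2 hI)).
  pose proof (contraction_factor_range p0 ltac:(lra)).
  induction n as [|n IH]; intro hn.
  - simpl. rewrite (proj2 (Nat.ltb_lt 0 k) hk). split; auto. exists l, r. split; auto. lra.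
  - destruct (IH ltac:(lia)) as [hg (l1 & r1 & h1 & hp)].
    rewrite (proj2 (Nat.ltb_lt n k) ltac:(lia)) in hg.
    destruct (enum_step n _ l1 r1 ltac:(lia) hg h1) as [G (l' & r' & I' & P')].
    simpl fcomp. split; [destruct (Nat.ltb (S n) k); auto|].
    exists l', r'. split; auto.
    pose proof (potential_range M l1 r1 _ (proj2 h1)) as hq1.
    pose proof (pow_between_0_1 (contraction_factor p0) n ltac:(lra)).
    pose proof (contracts_bound _ _ p0 hq1 ltac:(nra) hp1 P'). simpl. nra.
Qed.

Lemma f1_iter_potential z l r : (0 < k)%nat -> gapS L' (g O) z -> in_ivl (principal_ivl M) z l r ->
  forall n, let w := Nat.iter n (fcomp (Mstar M) e k) z in
  gapS L' (g O) w /\ exists l' r', in_ivl (principal_ivl M) w l' r' /\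
    potential M l' r' w <= contraction_factor (potential M l r z) ^ n * potential M l r z.
Proof.
  intros hk hz hI. set (p := potential M l r z).
  pose proof (potential_range M l r z (proj2 hI)) as hp. fold p in hp.
  pose proof (contraction_factor_range p ltac:(lra)) as hc.
  induction n as [|n IH]; cbv zeta in *.
  - split; auto. exists l, r. split; auto. simpl. fold p. lra.
  - destruct IH as [hg (l1 & r1 & h1 & hb)].
    pose proof (pow_between_0_1 (contraction_factor p) n ltac:(lra)).
    pose proof (potential_range M l1 r1 _ (proj2 h1)).
    destruct (fcomp_potential _ l1 r1 p hk hg h1 ltac:(nra) ltac:(lra) k (le_n k))
      as [G (l' & r' & I' & P')].
    rewrite Nat.ltb_irrefl in G. split; auto. exists l', r'. split; auto.
    pose proof (pow_le_base (contraction_factor p) k ltac:(lra) hk).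
    simpl. nra.
Qed.

Lemma f1_no_fixed_point : (0 < k)%nat ->
  ~ exists z, gapS L' (g O) z /\ eqc (fcomp (Mstar M) e k z) z.
Proof.
  intros hk (z & hz & [t et]).
  pose proof (proj1 (proj1 VE O hk)) as P0.
  destruct (principal_gapS_ivl M L' HR' (g O) z P0 hz) as [m hI].
  set (l := lr L' (g O) + IZR m) in hI. set (r := lnext L' (g O) + IZR m) in hI.
  destruct (f1_iter_potential z l r hk hz hI 1) as [_ (l' & r' & I' & P')]. simpl in I', P'.
  set (p := potential M l r z) in P'.
  pose proof (potential_range M l r z (proj2 hI)) as hp. fold p in hp.
  pose proof (contraction_factor_range p ltac:(lra)).
  assert (E : fcomp (Mstar M) e k z = z + IZR (- t)) by (rewrite opp_IZR; lra).
  assert (I2 : in_ivl (principal_ivl M) (fcomp (Mstar M) e k z) (l + IZR (- t)) (r + IZR (- t))).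
  { split; [apply (principal_ivl_shift M L' HR'), hI|]. rewrite E. pose proof (proj2 hI). lra. }
  destruct (principal_ivl_disjoint M _ _ _ _ _ I' I2) as [-> ->].
  rewrite E, potential_shift in P' by apply hI. fold p in P'. nra.
Qed.

Lemma f1_converges : (0 < k)%nat -> forall z, gapS L' (g O) z ->
  forall p, (p = lr L' (g O) \/ p = lnext L' (g O)) -> setA M p ->
  Un_cv (fun n => cdist (Nat.iter n (fcomp (Mstar M) e k) z) p) 0.
Proof.
  intros hk z hz q hq hA eps heps.
  pose proof (proj1 (proj1 VE O hk)) as P0.
  destruct (principal_gapS_ivl M L' HR' (g O) z P0 hz) as [m hI].
  set (p := potential M (lr L' (g O) + IZR m) (lnext L' (g O) + IZR m) z).
  pose proof (potential_range M _ _ z (proj2 hI)) as hp. fold p in hp.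
  pose proof (contraction_factor_range p ltac:(lra)) as hc.
  destruct (pow_lt_1_zero (contraction_factor p) ltac:(rewrite Rabs_right; lra) eps heps) as [N HN].
  exists N. intros n hn. specialize (HN n hn). unfold R_dist. rewrite Rminus_0_r.
  rewrite Rabs_right by apply Rle_ge, cdist_ge0.
  rewrite Rabs_right in HN by (apply Rle_ge, pow_le; lra).
  destruct (f1_iter_potential z _ _ hk hz hI n) as [hg (l' & r' & I' & P')]. fold p in P'.
  set (w := Nat.iter n (fcomp (Mstar M) e k) z) in *.
  destruct (principal_gapS_ivl M L' HR' (g O) w P0 hg) as [m' I2].
  destruct (principal_ivl_disjoint M _ _ _ _ _ I' I2) as [-> ->].
  pose proof (cdist_le_potential L' (g O) m' w q HR' P0 (proj2 I2) hq hA).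
  pose proof (pow_between_0_1 (contraction_factor p) n ltac:(lra)). nra.
Qed.

End Contraction.

Lemma Mstar_prop_star : prop_star (Mstar M).
Proof.
  intros L' HR' k g g' e VE hk. split.
  - exact (f1_no_fixed_point L' k g g' e HR' VE hk).
  - exact (f1_converges L' k g g' e HR' VE hk).
Qed.

Hypothesis Hcnt1 : cnt (lab L) KA (lN L) = cnt (lab L) KB (lN L).
Hypothesis Hcnt2 : cnt (lab L) KB (lN L) = cnt (lab L) KBi (lN L).
Hypothesis HbE : forall i, principal L i ->
  let P := exists j, principal L j /\ seteq (img (mb M) (gapS L i)) (gapS L j) in
  let Q := exists j, principal L j /\ seteq (img (mb M) (gapS L j)) (gapS L i) in
  (P /\ ~ Q) \/ (~ P /\ Q).
Hypothesis Hconn : forall i j, principal L i -> principal L j ->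
  clos_refl_trans nat (gap_adj M L) i j.

Lemma Mstar_markov : markov_conds (Mstar M) L.
Proof.
  assert (SA : forall x, setA M x -> inX M x) by (intros; left; auto).
  assert (SB : forall x, setB M x -> inX M x) by (intros; right; left; auto).
  refine (conj a_mod_homeo (conj a_mod_involutive (conj b_mod_homeo (conj b_mod_cube
    (conj b_mod_nontriv (conj HR (conj Hcnt1 (conj Hcnt2 (conj Halt
    (conj _ (conj _ (conj _ (conj _ (conj _ _)))))))))))))); simpl.
  - apply (img_agree M _ (ma M)); auto using a_mod_inX.
  - apply (img_agree M _ (mb M)); auto using b_mod_inX.
  - apply (img_agree M _ (mb M)); auto using b_mod_inX.
  - intros i Pi. destruct (HaE i Pi) as (j & Pj & hj). exists j.
    rewrite Mstar_img_gap_a by apply Pi. auto.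
  - intros i Pi. specialize (HbE i Pi). simpl in HbE.
    rewrite (ex_principal_iff _ _ (fun j _ => Mstar_img_gap_b i (gapS L j) (proj1 Pi))),
      (ex_principal_iff _ _ (fun j Pj => Mstar_img_gap_b j (gapS L i) (proj1 Pj))).
    exact HbE.
  - intros i j Pi Pj. apply (clos_refl_trans_incl (gap_adj M L)); auto.
    intros x y. apply Mstar_gap_adj.
Qed.

End MarkovSystem.

Theorem lemma10p1 :
  forall M : msys, is_markov M ->
  exists M' : msys, is_markov M' /\ equivalent M M' /\ prop_star M'.
Proof.
  intros M [L HM]. exists (Mstar M).
  pose proof HM as (Ha & Ha2 & Hb & Hb3 & Hb_nontriv & HR & Hcnt1 & Hcnt2 & Halt
                    & HaA & HbA & HbB & HaE & HbE & Hconn).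
  split; [exists L; apply Mstar_markov; assumption|].
  split; [exact (Mstar_equivalent M L HR)|].
  apply (Mstar_prop_star M L); assumption.
Qed.
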